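(* If $(B,\beta_1,\ldots,\beta_B)$ is a feasible solution of problem (RO-$\Sigma$), then for all contests $c<c'$ with $c\equiv c'$, either $c\prec_{\beta_1\cdots\beta_B}c'$ or $c'\prec_{\beta_1\cdots\beta_B}c$.
   Context: A ballot style consists of contests $\mathcal{C}=\{1,\ldots,C\}$, candidates $\mathcal{N}=\{1,\ldots,N\}$ partitioned into nonempty sets $\mathcal{N}_c$ ($c\in\mathcal{C}$), and positive integers $v_c$. A filled-out ballot is a subset $\beta\subseteq\mathcal{N}$; $\mathscr{B}=\{\beta\subseteq\mathcal{N}: |\mathcal{N}_c\cap\beta|\le v_c\ \forall c\}$. For $i\in\mathcal{N}_c$: $T^*_i(\beta_1,\ldots,\beta_B)=\sum_{b=1}^B\mathbb{I}\{i\in\beta_b\text{ and }|\mathcal{N}_c\cap\beta_b|\le v_c\}$, and for a bijection $\sigma$ of $\mathcal{N}$, $T^\sigma_i(\beta_1,\ldots,\beta_B)=\sum_{b=1}^B\mathbb{I}\{\sigma(i)\in\beta_b\text{ and }|\{\sigma(j)\in\beta_b: j\in\mathcal{N}_c\}|\le v_c\}$. $\Sigma$ is the set of non-identity bijections $\mathcal{N}\to\mathcal{N}$. Problem (RO-$\Sigma$): minimize $B$ over $B\in\mathbb{N}$ and $\beta_1,\ldots,\beta_B\in\mathscr{B}$ subject to $T^\sigma(\beta_1,\ldots,\beta_B)\neq T^*(\beta_1,\ldots,\beta_B)$ for all $\sigma\in\Sigma$. Two contests $c,c'$ are equivalent, $c\equiv c'$, iff $|\mathcal{N}_c|=|\mathcal{N}_{c'}|$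 and $v_c=v_{c'}$. $\mathcal{N}_c^k$ denotes the candidate with the $k$-th smallest index in $\mathcal{N}_c$ ($k=1,\ldots,|\mathcal{N}_c|$). Write $n_b(i)=|\{b\in\{1,\ldots,B\}: i\in\beta_b\}|$. We write $c\prec_{\beta_1\cdots\beta_B}c'$ iff $c\equiv c'$ and there exists $k\in\{1,\ldots,|\mathcal{N}_c|\}$ with $n(\mathcal{N}_c^{m})=n(\mathcal{N}_{c'}^{m})$ for all $m\in\{k+1,\ldots,|\mathcal{N}_c|\}$ and $n(\mathcal{N}_c^{k})<n(\mathcal{N}_{c'}^{k})$, where $n(i)=|\{b\in\{1,\ldots,B\}: i\in\beta_b\}|$. *)

From mathcomp Require Import all_boot all_fingroup.
Set Implicit Arguments. Unset Strict Implicit. Unset Printing Implicit Defensive.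

(* Ballot style: candidates 'I_N, contests 'I_C, [con i] = the contest of
   candidate i (so N_c = [set i | con i == c]), [v c] = votes allowed in c. *)
Section Ballots.
Variables (N C : nat) (con : 'I_N -> 'I_C) (v : 'I_C -> nat).

Definition Ncand (c : 'I_C) : {set 'I_N} := [set i | con i == c].

Definition valid_ballot (beta : {set 'I_N}) : Prop :=
  forall c : 'I_C, #|Ncand c :&: beta| <= v c.

Variable B : nat.
Variable beta : 'I_B -> {set 'I_N}.

Definition Tstar : {ffun 'I_N -> nat} :=
  [ffun i => \sum_(b < B)
     ((i \in beta b) && (#|Ncand (con i) :&: beta b| <= v (con i)) : nat)].

Definition Tsig (s : {perm 'I_N}) : {ffun 'I_N -> nat} :=
  [ffun i => \sum_(b < B)
     ((s i \in beta b) &&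
      (#|[set s j | j in Ncand (con i) & s j \in beta b]| <= v (con i)) : nat)].

Definition feasible : Prop :=
  (forall b, valid_ballot (beta b)) /\
  (forall s : {perm 'I_N}, s != 1%g -> Tsig s != Tstar).

Definition nb (i : 'I_N) : nat := #|[set b : 'I_B | i \in beta b]|.

(* candidates of contest c in increasing index order; N_c^k is the (k-1)-th
   entry (0-based) of this list, for 1 <= k <= |N_c| *)
Definition cand_list (c : 'I_C) : seq 'I_N := [seq i <- enum 'I_N | con i == c].

Definition nk (c : 'I_C) (k : nat) : nat := nth 0 (map nb (cand_list c)) k.-1.

Definition equiv_contest (c c' : 'I_C) : Prop :=
  #|Ncand c| = #|Ncand c'| /\ v c = v c'.

Definition prec (c c' : 'I_C) : Prop :=
  equiv_contest c c' /\
  exists k, [/\ 1 <= k <= #|Ncand c|,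
    (forall m, k < m <= #|Ncand c| -> nk c m = nk c' m) &
    nk c k < nk c' k].

End Ballots.

From mathcomp Require Import all_boot all_fingroup.
From mathcomp Require Import zify.
Set Implicit Arguments. Unset Strict Implicit. Unset Printing Implicit Defensive.

(* Let c < c' be equivalent contests and suppose neither
   c \prec c' nor c' \prec c.  Reading the vote-count profiles
   k |-> n(N_c^k) and k |-> n(N_{c'}^k) from the top index downwards, the
   last position where they differ would witness one of the two relations
   (lemma [last_difference]); hence the two profiles coincide.  Then the
   permutation [contest_swap] exchanging N_c^k with N_{c'}^k for every k
   (and fixing all other candidates) is not the identity, maps contests onto
   equivalent contests, and preserves n.  On valid ballots no contest is
   overvoted, so T^* = n and T^sigma = n o sigma for such a permutation
   ([Tstar_nb], [Tsig_nb]); thus T^sigma = T^*, contradicting feasibility. *)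

Lemma mem_cand_list N C (con : 'I_N -> 'I_C) c i :
  (i \in cand_list con c) = (con i == c).
Proof. by rewrite mem_filter mem_enum andbT. Qed.

Lemma uniq_cand_list N C (con : 'I_N -> 'I_C) c : uniq (cand_list con c).
Proof. exact/filter_uniq/enum_uniq. Qed.

Lemma size_cand_list N C (con : 'I_N -> 'I_C) c :
  size (cand_list con c) = #|Ncand con c|.
Proof.
rewrite cardE; apply/perm_size/uniq_perm; rewrite ?uniq_cand_list ?enum_uniq //.
by move=> i; rewrite mem_cand_list mem_enum inE.
Qed.

Lemma sum_indicator (T : finType) (P : pred T) :
  \sum_(t : T) (P t : nat) = #|[set t | P t]|.
Proof.
rewrite cardsE -sum1_card [RHS]big_mkcond.
by apply: eq_bigr => t _; rewrite unfold_in; case: (P t).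
Qed.

Section Tallies.
Variables (N C : nat) (con : 'I_N -> 'I_C) (v : 'I_C -> nat).
Variables (B : nat) (beta : 'I_B -> {set 'I_N}).
Hypothesis valid : forall b, valid_ballot con v (beta b).

(* On valid ballots every vote counts, so T^*_i is the number n(i) of
   ballots marking i. *)
Lemma Tstar_nb i : Tstar con v beta i = nb beta i.
Proof.
rewrite ffunE /nb -sum_indicator.
by apply: eq_bigr => b _; rewrite valid andbT.
Qed.

(* If sigma maps the contest of i into a single contest with the same number
   of allowed votes, then T^sigma_i = n(sigma i): the relabelled ballot
   marks no more candidates of that contest than the genuine one does. *)
Lemma Tsig_nb (s : {perm 'I_N}) i :
  (forall j, con j = con i -> con (s j) = con (s i)) ->
  v (con (s i)) = v (con i) ->
  Tsig con v beta s i = nb beta (s i).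
Proof.
move=> s_con s_v; rewrite ffunE /nb -sum_indicator.
apply: eq_bigr => b _; case: (s i \in beta b) => //=.
rewrite -s_v (leq_trans _ (valid b (con (s i)))) //.
apply/subset_leq_card/subsetP => _ /imsetP [j + ->].
by rewrite !inE => /andP [/eqP/s_con -> ->]; rewrite eqxx.
Qed.

End Tallies.

Lemma last_difference (f g : nat -> nat) n :
  (forall m, 0 < m <= n -> f m = g m) \/
  exists2 k, 0 < k <= n &
    (forall m, k < m <= n -> f m = g m) /\ f k != g k.
Proof.
elim: n => [|n IH]; first by left=> m; lia.
have [fgn | fgn] := eqVneq (f n.+1) (g n.+1); last first.
  by right; exists n.+1; [lia | split=> // m; lia].
have top m : m <= n.+1 -> ~~ (m <= n) -> f m = g m.
  by move=> m_le m_gt; have -> : m = n.+1 by lia.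
case: IH => [same | [k k_le [above fgk]]].
- left=> m m_le; have [m_le_n | m_gt] := boolP (m <= n); last by apply: top; lia.
  by apply: same; lia.
- right; exists k; first by lia.
  split=> // m m_le; have [m_le_n | m_gt] := boolP (m <= n); last by apply: top; lia.
  by apply: above; lia.
Qed.

Lemma prec_or_same_profile N C (con : 'I_N -> 'I_C) v B
    (beta : 'I_B -> {set 'I_N}) c c' :
  equiv_contest con v c c' ->
  [\/ prec con v beta c c', prec con v beta c' c |
      map (nb beta) (cand_list con c) = map (nb beta) (cand_list con c')].
Proof.
move=> [card_eq v_eq].
have [same | [k k_le [above nk_neq]]] :=
  last_difference (nk con beta c) (nk con beta c') #|Ncand con c|.
- apply: Or33; apply: (eq_from_nth (x0 := 0)); first by rewrite !size_map !size_cand_list.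
  move=> k; rewrite size_map size_cand_list => k_lt.
  by have := same k.+1; rewrite /nk /=; apply.
- case: (ltngtP (nk con beta c k) (nk con beta c' k)) nk_neq => // lt_k _.
  + by apply: Or31; split=> //; exists k.
  + apply: Or32; split; first by split.
    exists k; rewrite -card_eq; split=> // m m_le.
    by rewrite above // card_eq.
Qed.

Section ContestSwap.
Variables (N C : nat) (con : 'I_N -> 'I_C) (c c' : 'I_C).
Hypothesis neq_cc' : c != c'.
Hypothesis card_eq : #|Ncand con c| = #|Ncand con c'|.

Let L := cand_list con c.
Let L' := cand_list con c'.

Let size_eq : size L = size L'.
Proof. by rewrite !size_cand_list. Qed.

(* The map sending N_c^k to N_{c'}^k and N_{c'}^k to N_c^k, fixing every
   candidate of any other contest. *)
Definition swap_fun (i : 'I_N) : 'I_N :=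
  if con i == c then nth i L' (index i L)
  else if con i == c' then nth i L (index i L') else i.

Lemma con_swap_fun i : con (swap_fun i) =
  if con i == c then c' else if con i == c' then c else con i.
Proof.
rewrite /swap_fun; case: eqP => [ci | _]; last case: eqP => [ci' | //].
- by apply/eqP; rewrite -mem_cand_list mem_nth // -size_eq index_mem mem_cand_list ci.
- by apply/eqP; rewrite -mem_cand_list mem_nth // size_eq index_mem mem_cand_list ci'.
Qed.

Lemma swap_funK : involutive swap_fun.
Proof.
move=> i; have := con_swap_fun i; rewrite {2}/swap_fun.
have [ci | ci] := eqVneq (con i) c; last have [ci' | ci'] := eqVneq (con i) c'.
- move=> ->; rewrite eq_sym (negbTE neq_cc') eqxx /swap_fun ci eqxx.
  by rewrite index_uniq ?uniq_cand_list ?nth_index ?mem_cand_list ?ci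
     // -size_eq index_mem mem_cand_list ci.
- move=> ->; rewrite eqxx /swap_fun (negbTE ci) ci' eqxx.
  by rewrite index_uniq ?uniq_cand_list ?nth_index ?mem_cand_list ?ci'
     // size_eq index_mem mem_cand_list ci'.
- by move=> ->; rewrite /swap_fun !(negbTE ci) !(negbTE ci').
Qed.

Definition contest_swap : {perm 'I_N} := perm (can_inj swap_funK).

Lemma contest_swapE i : contest_swap i = swap_fun i.
Proof. exact: permE. Qed.

Lemma contest_swap_neq1 i : con i = c -> contest_swap != 1%g.
Proof.
move=> ci; apply: contraNneq neq_cc' => swap1.
have := con_swap_fun i; rewrite -contest_swapE swap1 perm1 ci eqxx.
by move->.
Qed.

Lemma con_contest_swap i j :
  con j = con i -> con (contest_swap j) = con (contest_swap i).
Proof. by rewrite !contest_swapE !con_swap_fun => ->. Qed.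

Lemma nb_contest_swap B (beta : 'I_B -> {set 'I_N}) :
  map (nb beta) L = map (nb beta) L' ->
  forall i, nb beta (contest_swap i) = nb beta i.
Proof.
move=> profile i; rewrite contest_swapE /swap_fun.
case: eqP => [ci | _]; last case: eqP => [ci' | //].
- have k_lt : index i L < size L' by rewrite -size_eq index_mem mem_cand_list ci.
  by rewrite -(nth_map i 0) // -profile (nth_map i 0) ?size_eq // nth_index
     ?mem_cand_list ?ci.
- have k_lt : index i L' < size L by rewrite size_eq index_mem mem_cand_list ci'.
  by rewrite -(nth_map i 0) // profile (nth_map i 0) -?size_eq // nth_index
     ?mem_cand_list ?ci'.
Qed.

End ContestSwap.

Theorem lemma3 (N C : nat) (con : 'I_N -> 'I_C) (v : 'I_C -> nat)
  (Hnonempty : forall c : 'I_C, exists i : 'I_N, con i = c)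
  (Hv : forall c : 'I_C, 0 < v c)
  (B : nat) (beta : 'I_B -> {set 'I_N}) :
  feasible con v beta ->
  forall c c' : 'I_C, (c < c')%N -> equiv_contest con v c c' ->
    prec con v beta c c' \/ prec con v beta c' c.
Proof.
move=> [valid identifying] c c' lt_cc' equiv_cc'.
have [prec_cc' | prec_c'c | profile] := prec_or_same_profile beta equiv_cc'.
- by left.
- by right.
have neq_cc' : c != c' by rewrite neq_ltn lt_cc'.
have [card_eq v_eq] := equiv_cc'.
have [i0 ci0] := Hnonempty c.
have swap_v i : v (con (contest_swap neq_cc' card_eq i)) = v (con i).
  by rewrite contest_swapE con_swap_fun; do 2?case: eqP => [-> | _].
have /eqP := identifying _ (contest_swap_neq1 neq_cc' card_eq ci0).
case; apply/ffunP => i.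
rewrite Tstar_nb // Tsig_nb // ?nb_contest_swap //.
exact: con_contest_swap.
Qed.
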